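(* Let $P,Q$ be finite posets and $R$ an indecomposable commutative unital ring. Then every $R$-linear algebra isomorphism $\Phi:I^3(P,R)\to I^3(Q,R)$ is of the form $\widehat\varphi$ for some poset isomorphism $\varphi:P\to Q$, where $\widehat\varphi$ is the $R$-linear map determined by $\widehat\varphi(e_{xyz})=e_{\varphi(x)\varphi(y)\varphi(z)}$ for all $x\le y\le z$ in $P$.
   Context: A commutative ring $R$ is indecomposable if its only idempotents are $0$ and $1$. For a finite poset $P$, let $P^3_\le=\{(x,y,z)\in P^3: x\le y\le z\}$. The third partial flag incidence algebra $I^3(P,R)$ is the $R$-module of all functions $f:P^3_\le\to R$ (pointwise operations) with the (non-associative) multiplication $(fg)(x_1,x_2,x_3)=\sum f(x_1,y_1,y_2)\,g(y_1,y_2,x_3)$, the sum over all $y_1,y_2$ with $x_1\le y_1\le x_2\le y_2\le x_3$. For $x\le y\le z$ in $P$, $e_{xyz}\in I^3(P,R)$ is the function taking value $1$ at $(x,y,z)$ and $0$ elsewhere; these form a basis of $I^3(P,R)$. *)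

From HB Require Import structures.
From mathcomp Require Import all_boot all_order all_algebra.
Set Implicit Arguments. Unset Strict Implicit. Unset Printing Implicit Defensive.
Import Order.TTheory GRing.Theory.
Local Open Scope order_scope.

Definition is_chain3 (d : Order.disp_t) (P : finPOrderType d) (t : P * P * P) : bool :=
  (t.1.1 <= t.1.2) && (t.1.2 <= t.2).

Notation chain3 P := {t : P * P * P | is_chain3 t}.

(* The third partial flag incidence algebra, as an R-module:
   all functions P^3_<= -> R. *)
Notation I3 P R := {ffun chain3 P -> R^o}.

Local Open Scope ring_scope.

(* value of f at (x,y,z), 0 if (x,y,z) is not a chain (only used on chains) *)
Definition at3 (d : Order.disp_t) (P : finPOrderType d) (R : comNzRingType)
  (f : I3 P R) (x y z : P) : R :=
  if @insub _ (@is_chain3 d P) (chain3 P) (x, y, z) is Some t then f t else 0.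

Definition mul3 (d : Order.disp_t) (P : finPOrderType d) (R : comNzRingType)
  (f g : I3 P R) : I3 P R :=
  [ffun t : chain3 P =>
     let x1 := (val t).1.1 in let x2 := (val t).1.2 in let x3 := (val t).2 in
     \sum_(y1 : P) \sum_(y2 : P | [&& (x1 <= y1)%O, (y1 <= x2)%O,
                                     (x2 <= y2)%O & (y2 <= x3)%O])
        at3 f x1 y1 y2 * at3 g y1 y2 x3].

Definition e3 (d : Order.disp_t) (P : finPOrderType d) (R : comNzRingType)
  (x y z : P) : I3 P R :=
  [ffun t : chain3 P => ((val t == (x, y, z)) : nat)%:R].

Definition indecomposable (R : comNzRingType) : Prop :=
  forall r : R, r * r = r -> r = 0 \/ r = 1.

Definition poset_iso (dP dQ : Order.disp_t) (P : finPOrderType dP)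
  (Q : finPOrderType dQ) (phi : P -> Q) : Prop :=
  bijective phi /\ forall x y : P, (phi x <= phi y)%O = (x <= y)%O.

From HB Require Import structures.
From mathcomp Require Import all_boot all_order all_algebra.
Set Implicit Arguments.
Unset Strict Implicit.
Unset Printing Implicit Defensive.
Import Order.TTheory GRing.Theory.
Local Open Scope ring_scope.
Local Open Scope order_scope.

(* Call v lr-idempotent when g |-> v g and g |-> g v are idempotent maps of the
   (non-associative) algebra I3(P, R). Testing this on basis elements and inducting
   on the size of the interval [a, c] shows that such a v vanishes at every
   (a, b, c) with a < c, so v is diagonal with idempotent diagonal values. Over an
   indecomposable ring the primitive lr-idempotents (nonzero, and either killed or
   fixed by left multiplication with any lr-idempotent) are therefore exactly the
   e_xxx, and a multiplicative bijection Phi permutes them: Phi e_xxx = e_sxsxsx.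
   For x <= c the identities e_xxx (e_xxc e_xcc) = e_xxc and (e_xxc e_xcc) e_ccc =
   e_xcc force Phi e_xxc and Phi e_xcc to be l e_sxsxsc and l e_sxscsc with l = l^2
   nonzero, so l = 1 and sx <= sc; finally e_abc = e_abb e_bbc. *)

Section Sums.
Variable R : comNzRingType.

Lemma sum_cond_point (T : finType) (C : pred T) (F : T -> R) t0 :
  (forall t, C t -> t != t0 -> F t = 0) -> \sum_(t | C t) F t = (C t0)%:R * F t0.
Proof.
move=> F_off; rewrite big_mkcond (bigD1 t0) //= big1 ?addr0 => [|t nt0].
  by case: (C t0); rewrite ?mul1r ?mul0r.
by case: ifP => // Ct; apply: F_off.
Qed.

Lemma sum_itv_ends d (P : finPOrderType d) (F : P -> R) a c : a < c ->
  (forall y, a < y -> y < c -> F y = 0) ->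
  \sum_(y | (a <= y) && (y <= c)) F y = F a + F c.
Proof.
move=> ac Fin; have le_ac := ltW ac.
rewrite (bigD1 a) ?lexx ?le_ac //= (bigD1 c) ?lexx ?le_ac ?gt_eqF //=.
rewrite big1 ?addr0 // => y /andP[/andP[/andP[ay yc] nya] nyc].
by apply: Fin; rewrite lt_def ?nya ?ay // eq_sym nyc.
Qed.

End Sums.

Arguments sum_cond_point {R T C F} t0.

Section Coordinates.
Variables (d : Order.disp_t) (P : finPOrderType d) (R : comNzRingType).
Local Notation A := (I3 P R).
Implicit Types (f g : A) (a b c x y z : P).

Lemma at3_chain f (t : chain3 P) : at3 f (val t).1.1 (val t).1.2 (val t).2 = f t.
Proof.
rewrite /at3; case: insubP => [t' _ Ht'|].
  by congr (f _); apply: val_inj; rewrite Ht'; case: (val t) => [[]].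
by case: t => [[[x y] z] Ht] /=; rewrite Ht.
Qed.

Lemma at3_nchain f x y z : ~~ ((x <= y) && (y <= z)) -> at3 f x y z = 0.
Proof. by move=> H; rewrite /at3; case: insubP => // t; rewrite /is_chain3 /= (negbTE H). Qed.

Lemma at3_0 x y z : at3 (0 : A) x y z = 0.
Proof. by rewrite /at3; case: insubP => // t _ _; rewrite ffunE. Qed.

Lemma eq_I3 f g :
  (forall x y z, x <= y -> y <= z -> at3 f x y z = at3 g x y z) -> f = g.
Proof.
move=> fg; apply/ffunP => t; rewrite -!at3_chain.
by case/andP: (valP t) => xy yz; apply: fg.
Qed.

Lemma at3_e3 a b c x y z :
  at3 (e3 R a b c) x y z =
  ((x == a) && (y == b) && (z == c) && ((a <= b) && (b <= c)))%:R.
Proof.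
have -> : (x == a) && (y == b) && (z == c) = ((x, y, z) == (a, b, c)) by [].
rewrite /at3 /e3; case: insubP => [t Ht Ev|Hn].
  rewrite ffunE Ev; case: eqP => // -[ex ey ez]; subst.
  by rewrite /is_chain3 /= in Ht; rewrite Ht.
by case: eqP => [[ex ey ez]|//]; subst; rewrite /is_chain3 /= in Hn; rewrite (negbTE Hn).
Qed.

Lemma at3_e3_diag x a b c :
  at3 (e3 R x x x) a b c = ((a == x) && (b == x) && (c == x))%:R.
Proof. by rewrite at3_e3 lexx !andbT. Qed.

Lemma e3_neq0 a b c : a <= b -> b <= c -> e3 R a b c != 0.
Proof.
move=> ab bc; apply/eqP => e0; have := at3_e3 a b c a b c.
by rewrite e0 at3_0 !eqxx ab bc => /eqP; rewrite eq_sym oner_eq0.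
Qed.

Lemma e3_diag_inj : injective (fun x => e3 R x x x).
Proof.
move=> x y /(congr1 (fun f => at3 f x x x)); rewrite !at3_e3_diag !eqxx /=.
by case: eqP => // _ /eqP; rewrite oner_eq0.
Qed.

Lemma at3_mul3 f g x1 x2 x3 :
  at3 (mul3 f g) x1 x2 x3 =
  \sum_(p : P * P | [&& x1 <= p.1, p.1 <= x2, x2 <= p.2 & p.2 <= x3])
     at3 f x1 p.1 p.2 * at3 g p.1 p.2 x3.
Proof.
rewrite {1}/at3; case: insubP => [t _ Ev|Hn].
  by rewrite /mul3 ffunE /= Ev /= pair_big_dep.
rewrite big1 // => p /and4P[h1 h2 h3 h4]; move: Hn; rewrite /is_chain3 /=.
by rewrite (le_trans h1 h2) (le_trans h3 h4).
Qed.

Lemma at3_mul3_eq12 f g a z :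
  at3 (mul3 f g) a a z =
  \sum_(y | (a <= y) && (y <= z)) at3 f a a y * at3 g a y z.
Proof.
rewrite at3_mul3 (eq_bigl (fun p => (p.1 == a) && ((a <= p.2) && (p.2 <= z)))).
  by rewrite -(pair_big_dep (pred1 a) (fun _ y => (a <= y) && (y <= z))
                 (fun y1 y2 => at3 f a y1 y2 * at3 g y1 y2 z)) big_pred1_eq.
by move=> [y1 y2]; rewrite /= eq_le; case: (y1 <= a); case: (a <= y1).
Qed.

Lemma at3_mul3_eq23 f g x c :
  at3 (mul3 f g) x c c =
  \sum_(y | (x <= y) && (y <= c)) at3 f x y c * at3 g y c c.
Proof.
have swapK : involutive (fun p : P * P => (p.2, p.1)) by case.
rewrite at3_mul3 (reindex_inj (inv_inj swapK)) /=.
rewrite (eq_bigl (fun p => (p.1 == c) && ((x <= p.2) && (p.2 <= c)))).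
  by rewrite -(pair_big_dep (pred1 c) (fun _ y => (x <= y) && (y <= c))
                 (fun y2 y1 => at3 f x y1 y2 * at3 g y1 y2 c)) big_pred1_eq.
move=> [y2 y1]; rewrite /= eq_le.
by case: (x <= y1); case: (y1 <= c); case: (c <= y2); case: (y2 <= c).
Qed.

End Coordinates.

Arguments at3_nchain {d P R} f x y z.

Section BasisProducts.
Variables (d : Order.disp_t) (P : finPOrderType d) (R : comNzRingType).
Local Notation A := (I3 P R).
Implicit Types (f g : A) (a b c k x y z : P).

Lemma at3_mul3_e3r f b c k x1 x2 x3 :
  at3 (mul3 f (e3 R b c k)) x1 x2 x3 =
  [&& x3 == k, c <= k, b <= x2 & x2 <= c]%:R * at3 f x1 b c.
Proof.
rewrite at3_mul3 (sum_cond_point (b, c)) => [|[y1 y2] _ /=]; last first.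
  by rewrite xpair_eqE at3_e3 => /nandP[]/negbTE->; rewrite ?andbF mulr0.
rewrite /= at3_e3 !eqxx /=.
case x1b: (x1 <= b); last by rewrite at3_nchain ?x1b ?mulr0 ?mul0r.
rewrite mulrCA -natrM mulnb [RHS]mulrC; congr (_ * (nat_of_bool _)%:R); apply/idP/idP.
  by case/and4P=> /and4P[_ -> -> _] -> _ ->.
by case/and4P=> /eqP-> ck bx xc; rewrite bx xc ck eqxx (le_trans bx xc).
Qed.

Lemma at3_mul3_e3l a b c g x1 x2 x3 :
  at3 (mul3 (e3 R a b c) g) x1 x2 x3 =
  [&& x1 == a, a <= b, b <= x2 & x2 <= c]%:R * at3 g b c x3.
Proof.
rewrite at3_mul3 (sum_cond_point (b, c)) => [|[y1 y2] _ /=]; last first.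
  by rewrite xpair_eqE at3_e3 => /nandP[]/negbTE->; rewrite ?andbF mul0r.
rewrite /= at3_e3 !eqxx /=.
case cx3: (c <= x3); last by rewrite (at3_nchain g) ?cx3 ?andbF ?mulr0.
rewrite mulrA -natrM mulnb !andbT; congr ((nat_of_bool _)%:R * _).
apply/idP/idP; first by case/and4P=> /and3P[_ -> ->] -> -> _.
by case/and4P=> /eqP-> ab bx xc; rewrite ab bx xc eqxx (le_trans bx xc).
Qed.

Lemma at3_mul3_e3diagl z g x1 x2 x3 :
  at3 (mul3 (e3 R z z z) g) x1 x2 x3 = ((x1 == z) && (x2 == z))%:R * at3 g z z x3.
Proof. by rewrite at3_mul3_e3l lexx /= -[(z <= x2) && _]andbC -eq_le. Qed.

Lemma at3_mul3_e3diagr f z x1 x2 x3 :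
  at3 (mul3 f (e3 R z z z)) x1 x2 x3 = ((x2 == z) && (x3 == z))%:R * at3 f x1 z z.
Proof. by rewrite at3_mul3_e3r lexx /= -[(z <= x2) && _]andbC -eq_le andbC. Qed.

Lemma mul3_e3_glue a b c : a <= b -> b <= c ->
  mul3 (e3 R a b b) (e3 R b b c) = e3 R a b c.
Proof.
move=> ab bc; apply: eq_I3 => x1 x2 x3 _ _.
rewrite at3_mul3_e3r !at3_e3 -natrM mulnb !eqxx ab bc lexx !andbT.
rewrite /= -[(b <= x2) && _]andbC -eq_le.
by case: (x1 == a); case: (x2 == b); case: (x3 == c).
Qed.

Lemma mul3_e3_diagl_fan x c : x <= c ->
  mul3 (e3 R x x x) (mul3 (e3 R x x c) (e3 R x c c)) = e3 R x x c.
Proof.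
move=> xc; apply: eq_I3 => a1 a2 a3 _ _.
rewrite at3_mul3_e3diagl at3_mul3_e3r !at3_e3 !eqxx !lexx xc /= !andbT.
by rewrite mulr1 -natrM mulnb.
Qed.

Lemma mul3_e3_diagr_fan x c : x <= c ->
  mul3 (mul3 (e3 R x x c) (e3 R x c c)) (e3 R c c c) = e3 R x c c.
Proof.
move=> xc; apply: eq_I3 => a1 a2 a3 _ _.
rewrite at3_mul3_e3diagr at3_mul3_e3r !at3_e3 !eqxx !lexx xc /= !andbT.
by rewrite mul1r -natrM mulnb andbC andbA.
Qed.

Lemma at3_e3diag_mul3_l f g y z a1 a2 a3 : mul3 g (e3 R z z z) = g ->
  at3 (mul3 (e3 R y y y) (mul3 f g)) a1 a2 a3 =
  at3 f y y z * at3 g y z z * at3 (e3 R y y z) a1 a2 a3.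
Proof.
move=> gz; have gE a b c : at3 g a b c = ((b == z) && (c == z))%:R * at3 g a z z.
  by rewrite -{1}gz at3_mul3_e3diagr.
rewrite at3_mul3_e3diagl at3_mul3_eq12 at3_e3 lexx /=.
under eq_bigr do rewrite gE.
rewrite (sum_cond_point z) => [|y' _ /negbTE->]; last by rewrite mul0r mulr0.
rewrite eqxx /=; have [->|_] := eqVneq a3 z; last by rewrite !andbF !mul0r !mulr0.
rewrite lexx !andbT mul1r.
by case: (a1 == y); case: (a2 == y); case: (y <= z); rewrite ?mul1r ?mul0r ?mulr1 ?mulr0.
Qed.

Lemma at3_e3diag_mul3_r f g y z a1 a2 a3 : mul3 (e3 R y y y) f = f ->
  at3 (mul3 (mul3 f g) (e3 R z z z)) a1 a2 a3 =
  at3 f y y z * at3 g y z z * at3 (e3 R y z z) a1 a2 a3.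
Proof.
move=> yf; have fE a b c : at3 f a b c = ((a == y) && (b == y))%:R * at3 f y y c.
  by rewrite -{1}yf at3_mul3_e3diagl.
rewrite at3_mul3_e3diagr at3_mul3_eq23 at3_e3 lexx /=.
under eq_bigr do rewrite fE.
rewrite (sum_cond_point y) => [|y' _ /negbTE->]; last by rewrite andbF !mul0r.
rewrite eqxx andbT; have [->|_] := eqVneq a1 y; last by rewrite !mul0r !mulr0.
rewrite lexx mul1r.
by case: (a2 == z); case: (a3 == z); case: (y <= z); rewrite ?mul1r ?mul0r ?mulr1 ?mulr0.
Qed.

End BasisProducts.

Section LRIdempotents.
Variables (d : Order.disp_t) (P : finPOrderType d) (R : comNzRingType).
Local Notation A := (I3 P R).
Implicit Types (f g v w : A) (a b c x y z : P).

Definition lr_idempotent v :=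
  forall g, mul3 v (mul3 v g) = mul3 v g /\ mul3 (mul3 g v) v = mul3 g v.

Lemma lr_idempotent_e3_diag x : lr_idempotent (e3 R x x x).
Proof.
move=> g; split; apply: eq_I3 => a b c _ _.
  by rewrite !at3_mul3_e3diagl !eqxx mul1r.
by rewrite !at3_mul3_e3diagr !eqxx mul1r.
Qed.

Section CornerVanishing.
Variables (v : A) (a c : P).
Hypotheses (v_idem : lr_idempotent v) (ac : a < c).
Hypothesis v_inner : forall a' c', a <= a' -> c' <= c -> a' < c' ->
  (a' != a) || (c' != c) -> forall b, at3 v a' b c' = 0.

Let le_ac : a <= c. Proof. exact: ltW. Qed.
Let ca_F : (c <= a) = false. Proof. exact: lt_geF. Qed.
Let ac_F : (a == c) = false. Proof. exact: lt_eqF. Qed.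

Let idem_l g x y z : at3 (mul3 v (mul3 v g)) x y z = at3 (mul3 v g) x y z.
Proof. by case: (v_idem g) => ->. Qed.

Let idem_r g x y z : at3 (mul3 (mul3 g v) v) x y z = at3 (mul3 g v) x y z.
Proof. by case: (v_idem g) => _ ->. Qed.

Let inner_l y b : a < y -> y < c -> at3 v a b y = 0.
Proof. by move=> ay yc; apply: v_inner; rewrite ?lexx ?(ltW yc) ?(lt_eqF yc) ?orbT. Qed.

Let inner_r y b : a < y -> y < c -> at3 v y b c = 0.
Proof. by move=> ay yc; apply: v_inner; rewrite ?lexx ?(ltW ay) ?(gt_eqF ay). Qed.

Local Notation p := (at3 v a a c).
Local Notation q := (at3 v a c c).

(* Testing lr-idempotency of v on e_acc, e_aac, e_ccc and e_aaa at the corners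
   of [a, c] gives p^2 = p, q^2 = q, pq = 0, v_aaa p + p^2 = p = v_aaa p + pq and
   pq + q v_ccc = q = q^2 + q v_ccc; the inner points of [a, c] contribute nothing
   by [v_inner]. Hence p = q = 0. *)
Let p_idem : p * p = p.
Proof.
have := idem_l (e3 R a c c) a c c.
rewrite at3_mul3_eq23 sum_itv_ends // => [|y ay _]; last first.
  by rewrite at3_mul3_e3r (at3_nchain v y a c) ?(lt_geF ay) ?mulr0.
rewrite !at3_mul3_e3r !eqxx !lexx le_ac /= !mul1r.
by rewrite (at3_nchain v c) ?ca_F ?mulr0 ?addr0.
Qed.

Let q_idem : q * q = q.
Proof.
have := idem_r (e3 R a a c) a a c.
rewrite at3_mul3_eq12 sum_itv_ends // => [|y _ yc]; last first.
  by rewrite at3_mul3_e3l (at3_nchain v a c y) ?(lt_geF yc) ?andbF ?mulr0 ?mul0r.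
rewrite !at3_mul3_e3l !eqxx !lexx le_ac /= !mul1r.
by rewrite (at3_nchain v a c a) ?ca_F ?andbF ?mul0r ?add0r.
Qed.

Let pq0 : p * q = 0.
Proof.
have := idem_l (e3 R c c c) a a c.
rewrite at3_mul3_eq12 sum_itv_ends // => [|y _ yc]; last first.
  by rewrite at3_mul3_e3diagr lt_eqF ?mul0r ?mulr0.
by rewrite !at3_mul3_e3diagr ac_F !eqxx /= !mul0r mulr0 add0r mul1r.
Qed.

Let ap_l : at3 v a a a * p + p * p = p.
Proof.
have := idem_l (e3 R a c c) a a c.
rewrite at3_mul3_eq12 sum_itv_ends // => [|y ay yc]; last first.
  by rewrite inner_l ?mul0r.
by rewrite !at3_mul3_e3r !eqxx !lexx le_ac /= !mul1r.
Qed.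

Let ap_r : at3 v a a a * p + p * q = p.
Proof.
have := idem_r (e3 R a a a) a a c.
rewrite at3_mul3_eq12 sum_itv_ends // => [|y ay yc]; last first.
  by rewrite at3_mul3_e3diagl inner_l ?mulr0 ?mul0r.
by rewrite !at3_mul3_e3diagl !eqxx /= !mul1r.
Qed.

Let qc_l : p * q + q * at3 v c c c = q.
Proof.
have := idem_l (e3 R c c c) a c c.
rewrite at3_mul3_eq23 sum_itv_ends // => [|y ay yc]; last first.
  by rewrite at3_mul3_e3diagr [at3 v y c c]inner_r ?mulr0.
by rewrite !at3_mul3_e3diagr !eqxx /= !mul1r.
Qed.

Let qc_r : q * q + q * at3 v c c c = q.
Proof.
have := idem_r (e3 R a a c) a c c.
rewrite at3_mul3_eq23 sum_itv_ends // => [|y ay yc]; last first.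
  by rewrite [at3 v y c c]inner_r ?mulr0.
by rewrite !at3_mul3_e3l !eqxx !lexx le_ac /= !mul1r.
Qed.

Let p0 : p = 0.
Proof.
have ap0 : at3 v a a a * p = 0.
  by apply: (addIr p); rewrite add0r -[in RHS]ap_l p_idem.
by rewrite -ap_r pq0 addr0 ap0.
Qed.

Let q0 : q = 0.
Proof.
have qc : q * at3 v c c c = q by rewrite -[in RHS]qc_l pq0 add0r.
by rewrite -q_idem; apply: (addIr q); rewrite add0r -[in RHS]qc_r qc.
Qed.

Lemma lr_idempotent_corner b : at3 v a b c = 0.
Proof.
have [->|nba] := eqVneq b a; first exact: p0.
have [->|nbc] := eqVneq b c; first exact: q0.
case ab: (a <= b); last by rewrite at3_nchain ?ab.
case bc: (b <= c); last by rewrite at3_nchain ?bc ?andbF.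
have ab' : a < b by rewrite lt_def nba.
have bc' : b < c by rewrite lt_def eq_sym nbc.
have := idem_l (e3 R b c c) a b c.
rewrite at3_mul3_e3r !lexx bc !eqxx /= mul1r => <-.
rewrite at3_mul3 big1 // => -[y1 y2] /= /and4P[ay1 y1b by2 y2c].
rewrite at3_mul3_e3r.
have [ey2|ny2] := eqVneq y2 c; last first.
  by rewrite inner_l ?mul0r ?(lt_le_trans ab' by2) // lt_def eq_sym ny2.
have [ey1|ny1] := eqVneq y1 a; first by rewrite ey1 ey2 p0 mul0r.
by rewrite inner_r ?mulr0 ?(le_lt_trans y1b bc') // lt_def ny1.
Qed.

End CornerVanishing.

Lemma lr_idempotent_offdiag v : lr_idempotent v ->
  forall a b c, a < c -> at3 v a b c = 0.
Proof.
move=> v_idem a b c; pose itv a c := [pred t : P | (a <= t) && (t <= c)].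
have [n] := ubnP #|itv a c|; elim: n a b c => // n IHn a b c lt_n ac.
apply: lr_idempotent_corner => // a' c' aa' c'c a'c' ne b'.
apply: IHn a'c'; rewrite -ltnS (leq_trans _ lt_n) // ltnS.
apply: proper_card; apply/properP; split.
  apply/subsetP => t; rewrite !inE => /andP[a't tc'].
  by rewrite (le_trans aa' a't) (le_trans tc' c'c).
case/orP: ne => [na'|nc'].
  exists a; first by rewrite inE lexx ltW.
  by rewrite inE; apply: contra na' => /andP[a'a _]; rewrite eq_le a'a.
exists c; first by rewrite inE lexx ltW.
by rewrite inE; apply: contra nc' => /andP[_ cc']; rewrite eq_le c'c.
Qed.

Lemma lr_idempotent_diag v : lr_idempotent v ->
  forall a b c, at3 v a b c = ((a == b) && (b == c))%:R * at3 v a a a.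
Proof.
move=> v_idem a b c; have [<-|nac] := eqVneq a c.
  have [<-|nab] := eqVneq a b; first by rewrite mul1r.
  rewrite mul0r at3_nchain //; apply: contra nab => /andP[ab ba].
  by rewrite eq_le ab ba.
have -> : (a == b) && (b == c) = false.
  by apply: contraNF nac => /andP[/eqP-> /eqP->].
case/boolP: ((a <= b) && (b <= c)) => [/andP[ab bc]|nabc]; last first.
  by rewrite at3_nchain ?mul0r.
by rewrite mul0r lr_idempotent_offdiag // lt_def eq_sym nac (le_trans ab bc).
Qed.

Lemma lr_idempotent_diag_idem v : lr_idempotent v ->
  forall x, at3 v x x x * at3 v x x x = at3 v x x x.
Proof.
move=> v_idem x; case/(_ (e3 R x x x)): v_idem=> /(congr1 (fun f => at3 f x x x)) + _.
rewrite at3_mul3_eq12 (big_pred1 x) => [|y]; last by rewrite /= eq_le andbC.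
by rewrite !at3_mul3_e3diagr !eqxx !mul1r.
Qed.

End LRIdempotents.

Section Primitive.
Variables (d : Order.disp_t) (P : finPOrderType d) (R : comNzRingType).
Hypothesis R_indec : indecomposable R.
Local Notation A := (I3 P R).
Implicit Types (v w : A) (x : P).

Definition primitive v := [/\ lr_idempotent v, v != 0 &
  forall w, lr_idempotent w -> mul3 w v = 0 \/ mul3 w v = v].

Lemma e3_diag_primitive x : primitive (e3 R x x x).
Proof.
split=> [||w w_idem]; [exact: lr_idempotent_e3_diag | exact: e3_neq0 |].
have wE a b c : at3 (mul3 w (e3 R x x x)) a b c = at3 w x x x * at3 (e3 R x x x) a b c.
  rewrite at3_mul3_e3diagr (lr_idempotent_diag w_idem) at3_e3_diag eqxx andbT.
  have [->|_] := eqVneq a x; last by rewrite !mul0r !mulr0.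
  by case: (b == x); case: (c == x); rewrite ?mul1r ?mul0r ?mulr1 ?mulr0.
have [] := R_indec (lr_idempotent_diag_idem w_idem x) => wx; [left | right];
  by apply: eq_I3 => a b c _ _; rewrite wE wx ?mul0r ?at3_0 ?mul1r.
Qed.

Lemma primitive_e3_diag v : primitive v -> exists x, v = e3 R x x x.
Proof.
case=> v_idem v0 v_min.
have [x vx|v_diag0] := pickP (fun x => at3 v x x x != 0); last first.
  case/eqP: v0; apply: eq_I3 => a b c _ _; rewrite at3_0 (lr_idempotent_diag v_idem).
  by move/negbFE/eqP: (v_diag0 a) => ->; rewrite mulr0.
have vx1 : at3 v x x x = 1.
  by have [vx0|] := R_indec (lr_idempotent_diag_idem v_idem x); first by rewrite vx0 eqxx in vx.
have exv : mul3 (e3 R x x x) v = e3 R x x x.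
  apply: eq_I3 => a b c _ _.
  rewrite at3_mul3_e3diagl (lr_idempotent_diag v_idem) vx1 eqxx at3_e3_diag mulr1.
  by rewrite -natrM mulnb [x == c]eq_sym.
exists x; have [ex0|] := v_min _ (lr_idempotent_e3_diag x); last by rewrite exv.
by move: (e3_neq0 R (lexx x) (lexx x)); rewrite -exv ex0 eqxx.
Qed.

End Primitive.

Section MulIso.
Variables (dP dQ : Order.disp_t) (P : finPOrderType dP) (Q : finPOrderType dQ).
Variables (R : comNzRingType) (F : I3 P R -> I3 Q R).
Hypotheses (R_indec : indecomposable R) (F_bij : bijective F) (F0 : F 0 = 0).
Hypothesis F_mul : {morph F : f g / mul3 f g}.

Let F_inj : injective F. Proof. exact: bij_inj. Qed.

Lemma mul_iso_neq0 f : f != 0 -> F f != 0.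
Proof. by apply: contraNneq; rewrite -F0 => /F_inj ->. Qed.

Lemma mul_iso_lr_idempotent v : lr_idempotent (F v) <-> lr_idempotent v.
Proof.
have [G FG GF] := F_bij; split=> v_idem g.
  by split; apply: F_inj; rewrite !F_mul; case: (v_idem (F g)).
by rewrite -(GF g) -!F_mul; case: (v_idem (G g)) => -> ->.
Qed.

Lemma mul_iso_primitive v : primitive v -> primitive (F v).
Proof.
have [G FG GF] := F_bij.
case=> v_idem v0 v_min; split; [exact/mul_iso_lr_idempotent | exact: mul_iso_neq0 |].
move=> w w_idem; rewrite -(GF w) -F_mul.
have /v_min[->|->] : lr_idempotent (G w) by apply/mul_iso_lr_idempotent; rewrite GF.
  by left.
by right.
Qed.

Lemma mul_iso_e3_diag x : exists y, F (e3 R x x x) = e3 R y y y.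
Proof. exact/primitive_e3_diag/mul_iso_primitive/e3_diag_primitive. Qed.

Section Relabel.
Variable tau : P -> Q.
Hypothesis F_diag : forall x, F (e3 R x x x) = e3 R (tau x) (tau x) (tau x).

Lemma mul_iso_e3_edges x c : x <= c ->
  [/\ tau x <= tau c, F (e3 R x x c) = e3 R (tau x) (tau x) (tau c)
    & F (e3 R x c c) = e3 R (tau x) (tau c) (tau c)].
Proof.
move=> xc; set f := F (e3 R x x c); set g := F (e3 R x c c).
have xf : mul3 (e3 R (tau x) (tau x) (tau x)) f = f.
  by rewrite -F_diag -F_mul mul3_e3_glue ?lexx.
have gc : mul3 g (e3 R (tau c) (tau c) (tau c)) = g.
  by rewrite -F_diag -F_mul mul3_e3_glue ?lexx.
set l := at3 f (tau x) (tau x) (tau c) * at3 g (tau x) (tau c) (tau c).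
have fE a b c' : at3 f a b c' = l * at3 (e3 R (tau x) (tau x) (tau c)) a b c'.
  by rewrite -(at3_e3diag_mul3_l f (tau x) a b c' gc) -!F_diag -!F_mul mul3_e3_diagl_fan.
have gE a b c' : at3 g a b c' = l * at3 (e3 R (tau x) (tau c) (tau c)) a b c'.
  by rewrite -(at3_e3diag_mul3_r g (tau c) a b c' xf) -!F_diag -!F_mul mul3_e3_diagr_fan.
have f0 : f != 0 by apply/mul_iso_neq0/e3_neq0; rewrite ?lexx.
have txc : tau x <= tau c.
  apply: contraNT f0 => ntxc; apply/eqP/eq_I3 => a b c' _ _.
  by rewrite fE at3_e3 (negbTE ntxc) !andbF mulr0 at3_0.
have ll : l * l = l by rewrite {3}/l fE gE !at3_e3 !eqxx !lexx txc !mulr1.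
have l1 : l = 1.
  have [l0|//] := R_indec ll.
  case/eqP: f0; apply: eq_I3 => a b c' _ _.
  by rewrite fE l0 mul0r at3_0.
by split=> //; apply: eq_I3 => a b c' _ _; rewrite ?fE ?gE l1 mul1r.
Qed.

Lemma mul_iso_e3 a b c : a <= b -> b <= c ->
  F (e3 R a b c) = e3 R (tau a) (tau b) (tau c).
Proof.
move=> ab bc; have [tab _ Eab] := mul_iso_e3_edges ab.
have [tbc Ebc _] := mul_iso_e3_edges bc.
by rewrite -mul3_e3_glue // F_mul Eab Ebc mul3_e3_glue.
Qed.

End Relabel.
End MulIso.

Theorem theorem3p19 (dP dQ : Order.disp_t) (P : finPOrderType dP)
  (Q : finPOrderType dQ) (R : comNzRingType) :
  indecomposable R ->
  forall Phi : {linear I3 P R -> I3 Q R},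
    bijective Phi ->
    (forall f g : I3 P R, Phi (mul3 f g) = mul3 (Phi f) (Phi g)) ->
    exists phi : P -> Q,
      poset_iso phi /\
      (forall x y z : P, (x <= y)%O -> (y <= z)%O ->
         Phi (e3 R x y z) = e3 R (phi x) (phi y) (phi z)).
Proof.
move=> R_indec Phi Phi_bij Phi_mul; have [Psi PhiK PsiK] := Phi_bij.
have Phi0 : Phi 0 = 0 := raddf0 Phi.
have Psi0 : Psi 0 = 0 by rewrite -Phi0 PhiK.
have Psi_bij : bijective Psi by exists Phi.
have Psi_mul : {morph Psi : f g / mul3 f g}.
  by move=> f g; apply: (bij_inj Phi_bij); rewrite Phi_mul !PsiK.
have [sigma Phi_diag] := fin_all_exists (mul_iso_e3_diag R_indec Phi_bij Phi0 Phi_mul).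
have [tau Psi_diag] := fin_all_exists (mul_iso_e3_diag R_indec Psi_bij Psi0 Psi_mul).
have sigmaK : cancel sigma tau.
  by move=> x; apply: (@e3_diag_inj _ _ R); rewrite -Psi_diag -Phi_diag PhiK.
have tauK : cancel tau sigma.
  by move=> y; apply: (@e3_diag_inj _ _ R); rewrite -Phi_diag -Psi_diag PsiK.
exists sigma; split; last by move=> x y z; apply: (mul_iso_e3 R_indec Phi_bij Phi0 Phi_mul Phi_diag).
split=> [|x y]; first by exists tau.
apply/idP/idP=> [|xy]; last by case: (mul_iso_e3_edges R_indec Phi_bij Phi0 Phi_mul Phi_diag xy).
by case/(mul_iso_e3_edges R_indec Psi_bij Psi0 Psi_mul Psi_diag); rewrite !sigmaK.
Qed.
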